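(* Let $G$ be a group, let $N$ be a normal subgroup of $G$, and let $S=\bigoplus_{g\in G}S_g$ be an epsilon-strongly $G$-graded ring, with $\epsilon_g$ the multiplicative identity element of $S_gS_{g^{-1}}$. Consider the induced $G/N$-grading $\{S_C\}_{C\in G/N}$ of $S$. Then: (a) For each $C\in G/N$, the set $E_C=\bigvee\{\epsilon_g\mid g\in C\}$ is a set of local units for the ring $S_CS_{C^{-1}}$. In particular, the induced $G/N$-grading is essentially epsilon-strong. (b) If for each $C\in G/N$ (i) the poset $(E_C,\le)$ contains no infinite chain and (ii) the maximal elements of $(E_C,\le)$ are pairwise orthogonal, then the induced $G/N$-grading is virtually epsilon-strong.
   Context: Rings are associative, not necessarily unital; $AB$ denotes finite sums of products. A $G$-grading of $S$: $S=\bigoplus_{g\in G}S_g$, $S_gS_h\subseteq S_{gh}$. Symmetric: $S_gS_{g^{-1}}S_g=S_g$ for all $g$. Epsilon-strong: symmetric and each $S_gS_{g^{-1}}$ is unital (identity $\epsilon_g$; these are central idempotents of $S_e$). Induced $G/N$-grading: $S_C=\bigoplus_{g\in C}S_g$. For a ring $R$, $E(R)$ is its set of idempotents with order $a\le b$ iff $a=ab=ba$, $a\vee b$ the least upper bound (for commuting $a,b$, $a\vee b=a+b-ab$), and $\bigvee F$ the set of finite joins of elements of $F$. A set of local units for $R$ is a $\vee$-closed subset $E\subseteq E(R)$ of pairwise commuting idempotents such that for each $r\in R$ there is $f\in E$ with $fr=rf=r$. $R$ has enough idempotents if there is a set $M$ of pairwise orthogonal, commuting idempotents of $R$ such that $\bigvee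 M$ is a set of local units for $R$. A symmetric grading $\{T_h\}_{h\in H}$ is essentially (resp. virtually) epsilon-strong if every ring $T_hT_{h^{-1}}$ has a set of local units (resp. has enough idempotents). *)

From HB Require Import structures.
From mathcomp Require Import all_boot all_algebra.
Set Implicit Arguments. Unset Strict Implicit. Unset Printing Implicit Defensive.
Import GRing.Theory.

(* Rings: an additive group [V : zmodType] together with an associative,
   bi-distributive multiplication [m] (no unit required). *)

Section Defs.
Variable V : zmodType.
Variable m : V -> V -> V.

Local Open Scope ring_scope.

Definition nonunital_ring_axioms : Prop :=
  (forall x y z, m x (m y z) = m (m x y) z) /\
  (forall x y z, m x (y + z) = m x y + m x z) /\
  (forall x y z, m (x + y) z = m x z + m y z).

Inductive fsums (P : V -> Prop) : V -> Prop :=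
| fsums0 : fsums P 0
| fsums_in x : P x -> fsums P x
| fsumsD x y : fsums P x -> fsums P y -> fsums P (x + y).

Definition prodset (A B : V -> Prop) : V -> Prop :=
  fsums (fun z => exists a b, A a /\ B b /\ z = m a b).

Definition set_eq (A B : V -> Prop) : Prop := forall x, A x <-> B x.

Definition unit_of (R : V -> Prop) (e : V) : Prop :=
  R e /\ forall x, R x -> m e x = x /\ m x e = x.

Definition idem (R : V -> Prop) (e : V) : Prop := R e /\ m e e = e.
Definition idem_le (a b : V) : Prop := a = m a b /\ a = m b a.

Definition is_join (R : V -> Prop) (a b c : V) : Prop :=
  idem R c /\ idem_le a c /\ idem_le b c /\
  forall d, idem R d -> idem_le a d -> idem_le b d -> idem_le c d.

Inductive joins (R F : V -> Prop) : V -> Prop :=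
| joins_in x : F x -> joins R F x
| joins_join a b c : joins R F a -> joins R F b -> is_join R a b c -> joins R F c.

Definition local_units (R E : V -> Prop) : Prop :=
  (forall e, E e -> idem R e) /\
  (forall a b, E a -> E b -> m a b = m b a) /\
  (forall a b c, E a -> E b -> is_join R a b c -> E c) /\
  (forall r, R r -> exists f, E f /\ m f r = r /\ m r f = r).

Definition has_local_units (R : V -> Prop) : Prop :=
  exists E, local_units R E.

Definition enough_idempotents (R : V -> Prop) : Prop :=
  exists M : V -> Prop,
    (forall e, M e -> idem R e) /\
    (forall a b, M a -> M b -> m a b = m b a) /\
    (forall a b, M a -> M b -> a <> b -> m a b = 0 /\ m b a = 0) /\
    local_units R (joins R M).

Definition no_infinite_chain (E : V -> Prop) : Prop :=
  ~ exists f : nat -> V, injective f /\ (forall n, E (f n)) /\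
      forall i j, idem_le (f i) (f j) \/ idem_le (f j) (f i).

Definition maximal_in (E : V -> Prop) (e : V) : Prop :=
  E e /\ forall f, E f -> idem_le e f -> f = e.

Definition maximals_orthogonal (E : V -> Prop) : Prop :=
  forall a b, maximal_in E a -> maximal_in E b -> a <> b ->
    m a b = 0 /\ m b a = 0.

Section Graded.
Variable G : groupType.
Local Open Scope group_scope.

Definition grading (S : G -> V -> Prop) : Prop :=
  (forall g, S g 0%R /\ (forall x y, S g x -> S g y -> S g (x + y)%R) /\
             (forall x, S g x -> S g (- x)%R)) /\
  (forall g h x y, S g x -> S h y -> S (g * h) (m x y)) /\
  (forall x, fsums (fun y => exists g, S g y) x) /\
  (forall l : seq (G * V), uniq (map fst l) ->
     (forall p, p \in l -> S p.1 p.2) ->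
     (\sum_(p <- l) p.2)%R = 0%R -> forall p, p \in l -> p.2 = 0%R).

Definition symmetric_grading (S : G -> V -> Prop) : Prop :=
  forall g, set_eq (prodset (prodset (S g) (S g^-1)) (S g)) (S g).

Definition epsilon_strong (S : G -> V -> Prop) : Prop :=
  symmetric_grading S /\
  forall g, exists e, unit_of (prodset (S g) (S g^-1)) e.

Definition normal_subgroup (N : G -> Prop) : Prop :=
  N 1 /\ (forall x y, N x -> N y -> N (x * y)) /\ (forall x, N x -> N x^-1) /\
  (forall x g, N x -> N (g^-1 * x * g)).

Definition is_coset (N C : G -> Prop) : Prop :=
  exists g, forall x, C x <-> N (g^-1 * x).

Definition coset_inv (C : G -> Prop) : G -> Prop := fun x => C x^-1.

Definition SC (S : G -> V -> Prop) (C : G -> Prop) : V -> Prop :=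
  fsums (fun y => exists g, C g /\ S g y).

Definition RC (S : G -> V -> Prop) (C : G -> Prop) : V -> Prop :=
  prodset (SC S C) (SC S (coset_inv C)).

Definition EC (S : G -> V -> Prop) (eps : G -> V) (C : G -> Prop) : V -> Prop :=
  joins (RC S C) (fun e => exists g, C g /\ e = eps g).

Definition induced_symmetric (N : G -> Prop) (S : G -> V -> Prop) : Prop :=
  forall C, is_coset N C ->
    set_eq (prodset (RC S C) (SC S C)) (SC S C).

Definition induced_essentially_eps_strong (N : G -> Prop) (S : G -> V -> Prop) : Prop :=
  induced_symmetric N S /\ forall C, is_coset N C -> has_local_units (RC S C).

Definition induced_virtually_eps_strong (N : G -> Prop) (S : G -> V -> Prop) : Prop :=
  induced_symmetric N S /\ forall C, is_coset N C -> enough_idempotents (RC S C).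

End Graded.
End Defs.

From HB Require Import structures.
From mathcomp Require Import all_boot all_algebra.
From Stdlib Require Import Classical IndefiniteDescription.
Set Implicit Arguments. Unset Strict Implicit. Unset Printing Implicit Defensive.
Import GRing.Theory.

(* Each eps_g is an idempotent of S_1 commuting with all of S_1, with eps_g s = s
   and s eps_(g^-1) = s for s in S_g; for g in C it lies in S_C S_(C^-1).  Commuting
   idempotents a, b have the join a + b - ab, so the finite joins of the eps_g
   (g in C) are pairwise commuting idempotents forming a directed set E_C.  A
   product s t with s in S_g, t in S_h (g in C, h in C^-1) is fixed on the left by
   eps_g and on the right by eps_(h^-1), hence on both sides by a common upper bound
   of the two in E_C; directedness carries this over to finite sums, so E_C is a set
   of local units.  Symmetry of the induced grading comes from C C^-1 C = C and
   s = eps_g s.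
   For (b): in a poset without infinite chains a maximal element exists (dependent
   choice), and in the directed set E_C it is the greatest element eps; then eps is
   an identity of S_C S_(C^-1) and M = {eps} works. *)

Section NonunitalRing.
Variables (V : zmodType) (m : V -> V -> V).
Hypothesis Hm : nonunital_ring_axioms m.
Local Open Scope ring_scope.
Implicit Types (a b c e f x y : V) (P Q R E F T : V -> Prop).

Lemma mA x y z : m x (m y z) = m (m x y) z. Proof. by case: Hm. Qed.
Lemma mDr x y z : m x (y + z) = m x y + m x z. Proof. by case: Hm => _ []. Qed.
Lemma mDl x y z : m (x + y) z = m x z + m y z. Proof. by case: Hm => _ []. Qed.
Lemma m0r x : m x 0 = 0.
Proof. by apply: (addrI (m x 0)); rewrite -mDr !addr0. Qed.
Lemma m0l x : m 0 x = 0.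
Proof. by apply: (addrI (m 0 x)); rewrite -mDl !addr0. Qed.
Lemma mNr x y : m x (- y) = - m x y.
Proof. by apply/eqP; rewrite -addr_eq0 -mDr addNr m0r. Qed.
Lemma mNl x y : m (- x) y = - m x y.
Proof. by apply/eqP; rewrite -addr_eq0 -mDl addNr m0l. Qed.
Lemma mBr x y z : m x (y - z) = m x y - m x z. Proof. by rewrite mDr mNr. Qed.
Lemma mBl x y z : m (x - y) z = m x z - m y z. Proof. by rewrite mDl mNl. Qed.

Lemma fsums_least P T : T 0 -> (forall x y, T x -> T y -> T (x + y)) ->
  (forall x, P x -> T x) -> forall x, fsums P x -> T x.
Proof. by move=> T0 TD PT x; elim => //; auto. Qed.

Lemma fsums_mono P Q : (forall x, P x -> Q x) -> forall x, fsums P x -> fsums Q x.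
Proof.
move=> PQ; apply: fsums_least => [||x /PQ]; [exact: fsums0 | exact: fsumsD | exact: fsums_in].
Qed.

Lemma fsumsN P : (forall x, P x -> P (- x)) -> forall x, fsums P x -> fsums P (- x).
Proof.
move=> PN x; elim=> [|y /PN|y z _ Hy _ Hz].
- by rewrite oppr0; apply: fsums0.
- exact: fsums_in.
- by rewrite opprD; apply: fsumsD.
Qed.

Lemma fsums_mul_least P Q T : T 0 -> (forall x y, T x -> T y -> T (x + y)) ->
  (forall a b, P a -> Q b -> T (m a b)) ->
  forall x y, fsums P x -> fsums Q y -> T (m x y).
Proof.
move=> T0 TD PQT x y Px; elim: Px y => [y _|a Pa|u v _ Hu _ Hv y Qy].
- by rewrite m0l.
- by apply: fsums_least => [|u v|b /(PQT a b Pa)]; rewrite ?m0r ?mDr //; apply: TD.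
- by rewrite mDl; apply: TD; auto.
Qed.

Lemma prodset_least P Q T : T 0 -> (forall x y, T x -> T y -> T (x + y)) ->
  (forall a b, P a -> Q b -> T (m a b)) -> forall x, prodset m P Q x -> T x.
Proof. by move=> T0 TD PQT; apply: fsums_least => // z [a [b [Pa [Qb ->]]]]; apply: PQT. Qed.

Lemma prodset_in P Q a b : P a -> Q b -> prodset m P Q (m a b).
Proof. by move=> Pa Qb; apply: fsums_in; exists a, b. Qed.

Lemma prodset_mono P Q P' Q' : (forall x, P x -> P' x) -> (forall x, Q x -> Q' x) ->
  forall x, prodset m P Q x -> prodset m P' Q' x.
Proof. by move=> PP' QQ'; apply: fsums_mono => z [a [b [Pa [Qb ->]]]]; exists a, b; auto. Qed.

Lemma prodsetN P Q : (forall x, P x -> P (- x)) ->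
  forall x, prodset m P Q x -> prodset m P Q (- x).
Proof.
by move=> PN; apply: fsumsN => z [a [b [Pa [Qb ->]]]]; exists (- a), b; rewrite mNl; auto.
Qed.

Definition rng_closed R : Prop :=
  (forall x y, R x -> R y -> R (x + y)) /\ (forall x, R x -> R (- x)) /\
  (forall x y, R x -> R y -> R (m x y)).

Lemma idem_le_trans a b c : idem_le m a b -> idem_le m b c -> idem_le m a c.
Proof.
move=> [ab ba] [bc cb]; split.
- by rewrite {1}ab {1}bc mA -ab.
- by rewrite {1}ba {1}cb -mA -ba.
Qed.

Lemma idem_le_anti a b : idem_le m a b -> idem_le m b a -> a = b.
Proof. by move=> [ab _] [_ ab']; rewrite ab -ab'. Qed.

Lemma idem_le_lfix f c x : idem_le m f c -> m f x = x -> m c x = x.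
Proof. by move=> [_ fcf] fx; rewrite -fx mA -fcf. Qed.

Lemma idem_le_rfix f c x : idem_le m f c -> m x f = x -> m x c = x.
Proof. by move=> [ffc _] xf; rewrite -xf -mA -ffc. Qed.

Lemma is_join_uniq R a b c c' : is_join m R a b c -> is_join m R a b c' -> c = c'.
Proof.
move=> [Ic [ac [bc lc]]] [Ic' [ac' [bc' lc']]].
by apply: idem_le_anti; [apply: lc | apply: lc'].
Qed.

Lemma is_join_commuting R a b : rng_closed R -> idem m R a -> idem m R b ->
  m a b = m b a -> is_join m R a b (a + b - m a b).
Proof.
move=> [RD [RN RM]] [Ra aa] [Rb bb] ab.
have Rc : R (a + b - m a b) by apply: (RD); [apply: RD | apply/RN/RM].
have ca : m (a + b - m a b) a = a.
  by rewrite mBl !mDl aa -mA -ab mA aa addrK.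
have cb : m (a + b - m a b) b = b.
  by rewrite mBl !mDl bb -mA bb (addrC (m a b)) addrK.
split; [split=> //|split; [|split]].
- by rewrite mBr !mDr ca cb mA ca.
- by split; [rewrite mBr !mDr aa mA aa addrK | rewrite ca].
- by split; [rewrite mBr !mDr bb ab mA bb (addrC (m b a)) addrK | rewrite cb].
- move=> d [_ dd] [ad da] [bd db]; split.
  + by rewrite mBl !mDl -ad -bd -mA -bd.
  + by rewrite mBr !mDr -da -db mA -da.
Qed.

Definition commutant F y : Prop := forall f, F f -> m y f = m f y.

Definition directed E : Prop :=
  forall a b, E a -> E b -> exists c, E c /\ idem_le m a c /\ idem_le m b c.

Lemma join_closed_directed R E : rng_closed R -> (forall e, E e -> idem m R e) ->
  (forall a b, E a -> E b -> m a b = m b a) ->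
  (forall a b c, E a -> E b -> is_join m R a b c -> E c) -> directed E.
Proof.
move=> R_rng E_idem E_comm E_join a b Ea Eb.
have abc := is_join_commuting R_rng (E_idem a Ea) (E_idem b Eb) (E_comm a b Ea Eb).
exists (a + b - m a b); split; first exact: E_join abc.
by case: abc => _ [ac [bc _]].
Qed.

Section Joins.
Variables (R F : V -> Prop).
Hypotheses (R_rng : rng_closed R) (F_idem : forall e, F e -> idem m R e).
Hypothesis F_comm : forall a b, F a -> F b -> m a b = m b a.

Lemma joins_idem_commutant x :
  joins m R F x -> idem m R x /\ forall y, commutant F y -> m x y = m y x.
Proof.
elim=> [e Fe|a b c _ [Ia Ca] _ [Ib Cb] abc].
  by split; [exact: F_idem | move=> y /(_ e Fe)].
split; first by case: abc.
have ab : m a b = m b a by apply: Ca => f Ff; apply: Cb => f' Ff'; apply: F_comm.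
rewrite (is_join_uniq abc (is_join_commuting R_rng Ia Ib ab)) => y Fy.
have ay := Ca y Fy; have yb := Cb y Fy.
by rewrite mBl mBr !mDl !mDr ay yb -mA yb mA ay mA.
Qed.

Lemma joins_comm a b : joins m R F a -> joins m R F b -> m a b = m b a.
Proof.
move=> /joins_idem_commutant [_ Ca] /joins_idem_commutant [_ Cb].
by apply: Ca => f Ff; apply: Cb => f' Ff'; apply: F_comm.
Qed.

End Joins.

Definition locally_fixed E x : Prop := exists f, E f /\ m f x = x /\ m x f = x.

Section Directed.
Variable E : V -> Prop.
Hypotheses (E_directed : directed E) (E_nonempty : exists e, E e).

Lemma locally_fixed0 : locally_fixed E 0.
Proof. by case: E_nonempty => e Ee; exists e; rewrite m0l m0r. Qed.

Lemma locally_fixedD x y : locally_fixed E x -> locally_fixed E y -> locally_fixed E (x + y).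
Proof.
move=> [f [Ef [fx xf]]] [f' [Ef' [f'y yf']]].
have [c [Ec [fc f'c]]] := E_directed Ef Ef'.
exists c; split=> //; rewrite mDl mDr (idem_le_lfix fc fx) (idem_le_rfix fc xf).
by rewrite (idem_le_lfix f'c f'y) (idem_le_rfix f'c yf').
Qed.

Lemma locally_fixed_mul f f' x y : E f -> E f' -> m f x = x -> m y f' = y ->
  locally_fixed E (m x y).
Proof.
move=> Ef Ef' fx yf'; have [c [Ec [fc f'c]]] := E_directed Ef Ef'.
by exists c; rewrite -mA (idem_le_rfix f'c yf') mA (idem_le_lfix fc fx).
Qed.

End Directed.

Lemma local_units_directed R E : rng_closed R -> local_units m R E -> directed E.
Proof.
move=> R_rng [E_idem [E_comm [E_join _]]].
exact: (join_closed_directed R_rng E_idem E_comm E_join).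
Qed.

Lemma no_infinite_chain_inflationary E (next : V -> V) e0 :
  (forall e, E e -> m e e = e) -> E e0 ->
  (forall e, E e -> E (next e) /\ idem_le m e (next e) /\ next e <> e) ->
  ~ no_infinite_chain m E.
Proof.
move=> E_idem Ee0 Hnext; apply; pose f n := iter n next e0.
have Ef n : E (f n) by elim: n => [|n /Hnext []].
have f_mono i j : (i <= j)%N -> idem_le m (f i) (f j).
  move/subnKC <-; elim: (j - i)%N => [|k IH]; first by rewrite addn0; split; rewrite E_idem.
  by rewrite addnS; apply: idem_le_trans IH (Hnext _ (Ef _)).2.1.
have f_strict i j : (i < j)%N -> f i <> f j.
  move=> ij fij; apply: (Hnext _ (Ef i)).2.2; apply: idem_le_anti.
    by rewrite {2}fij; exact: (f_mono i.+1 j ij).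
  exact: (Hnext _ (Ef i)).2.1.
exists f; split; last split=> // i j.
  by move=> i j fij; case: (ltngtP i j) => // [/f_strict|/f_strict]; rewrite fij.
by case: (leqP i j) => [ij|/ltnW ji]; [left | right]; apply: f_mono.
Qed.

Lemma exists_maximal_in E : (forall e, E e -> m e e = e) -> (exists e, E e) ->
  no_infinite_chain m E -> exists e, maximal_in m E e.
Proof.
move=> E_idem [e0 Ee0] Enc; apply: NNPP => no_max.
have step e : exists f, E e -> E f /\ idem_le m e f /\ f <> e.
  case: (classic (E e)) => [Ee|nEe]; last by exists e.
  apply: NNPP => no_up; apply: no_max; exists e; split=> // f Ef ef.
  by apply: NNPP => fe; apply: no_up; exists f.
pose next e := proj1_sig (constructive_indefinite_description _ (step e)).
apply: (no_infinite_chain_inflationary (next := next) E_idem Ee0) => // e.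
exact: (proj2_sig (constructive_indefinite_description _ (step e))).
Qed.

Lemma directed_maximal_greatest E e : directed E -> maximal_in m E e ->
  forall f, E f -> idem_le m f e.
Proof.
move=> E_directed [Ee e_max] f Ef; have [c [Ec [ec fc]]] := E_directed _ _ Ee Ef.
by rewrite -(e_max c Ec ec).
Qed.

Lemma enough_idempotents_of_greatest R E e : local_units m R E -> E e ->
  (forall f, E f -> idem_le m f e) -> enough_idempotents m R.
Proof.
move=> [E_idem [E_comm [E_join E_fix]]] Ee e_top.
have joins_e x : joins m R (eq^~ e) x -> E x.
  by elim=> [_ ->|a b c _ Ea _ Eb]; last exact: E_join.
exists (eq^~ e); split; first by move=> a ->; exact: E_idem.
split; first by move=> a b -> ->.
split; first by move=> a b -> ->.
split; first by move=> a /joins_e; exact: E_idem.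
split; first by move=> a b /joins_e Ea /joins_e Eb; exact: E_comm.
split; first by move=> a b c Ja Jb; exact: joins_join.
move=> r /E_fix [f [Ef [fr rf]]]; exists e; split; first exact: joins_in.
by split; [exact: idem_le_lfix (e_top f Ef) fr | exact: idem_le_rfix (e_top f Ef) rf].
Qed.

Lemma local_units_enough_idempotents R E : rng_closed R -> local_units m R E ->
  (exists e, E e) -> no_infinite_chain m E -> enough_idempotents m R.
Proof.
move=> R_rng RE E_nonempty Enc.
have [e e_max] := exists_maximal_in (fun e Ee => (RE.1 e Ee).2) E_nonempty Enc.
apply: (enough_idempotents_of_greatest RE e_max.1).
exact: directed_maximal_greatest (local_units_directed R_rng RE) e_max.
Qed.

Section Grading.
Variables (G : groupType) (S : G -> V -> Prop) (eps : G -> V).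
Hypotheses (HS : grading m S) (S_sym : symmetric_grading m S).
Hypothesis eps_unit : forall g, unit_of m (prodset m (S g) (S g^-1)%g) (eps g).
Implicit Types (g h k : G) (C D : G -> Prop).

Lemma grading0 g : S g 0. Proof. by case: HS => /(_ g) []. Qed.
Lemma gradingD g x y : S g x -> S g y -> S g (x + y).
Proof. by case: HS => /(_ g) [_ [SD _]] _; apply: SD. Qed.
Lemma gradingN g x : S g x -> S g (- x).
Proof. by case: HS => /(_ g) [_ [_ SN]] _; apply: SN. Qed.
Lemma gradingM g h x y : S g x -> S h y -> S (g * h)%g (m x y).
Proof. by case: HS => _ [SM _]; apply: SM. Qed.

Lemma prodset_inv_S1 g x : prodset m (S g) (S g^-1)%g x -> S 1%g x.
Proof.
apply: prodset_least => [||a b Sa Sb]; [exact: grading0 | exact: gradingD |].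
by rewrite -(mulgV g); apply: gradingM.
Qed.

Lemma eps_S1 g : S 1%g (eps g).
Proof. exact: prodset_inv_S1 (eps_unit g).1. Qed.

Lemma eps_idem g : m (eps g) (eps g) = eps g.
Proof. by have [Re e_unit] := eps_unit g; rewrite (e_unit _ Re).1. Qed.

Lemma eps_mull g s : S g s -> m (eps g) s = s.
Proof.
move=> /(S_sym g s).2; apply: (prodset_least (T := fun x => m (eps g) x = x)).
- exact: m0r.
- by move=> x y ex ey; rewrite /= mDr ex ey.
- by move=> a b Ra _; rewrite mA ((eps_unit g).2 a Ra).1.
Qed.

Lemma eps_mulr g s : S g s -> m s (eps g^-1%g) = s.
Proof.
move=> /(S_sym g s).2; apply: (prodset_least (T := fun x => m x (eps g^-1%g) = x)).
- exact: m0l.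
- by move=> x y xe ye; rewrite /= mDl xe ye.
move=> a b Ra Sb; move: a Ra.
apply: (prodset_least (T := fun a => m (m a b) (eps g^-1%g) = m a b)).
- by rewrite /= !m0l.
- by move=> x y xe ye; rewrite /= !mDl xe ye.
move=> u v _ Sv; have Rvb : prodset m (S g^-1%g) (S g^-1^-1)%g (m v b).
  by apply: prodset_in; rewrite ?invgK.
by rewrite -!mA (mA v) ((eps_unit g^-1%g).2 _ Rvb).2.
Qed.

Lemma prodset_mulS1 g s x : S 1%g s -> prodset m (S g) (S g^-1%g) x ->
  prodset m (S g) (S g^-1%g) (m s x) /\ prodset m (S g) (S g^-1%g) (m x s).
Proof.
move=> Ss; apply: (prodset_least (T := fun x => prodset m (S g) (S g^-1%g) (m s x) /\
                                                 prodset m (S g) (S g^-1%g) (m x s))).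
- by rewrite /= m0l m0r; split; exact: fsums0.
- by move=> u v [su us] [sv vs]; rewrite /= mDl mDr; split; exact: fsumsD.
move=> a b Sa Sb; split; [rewrite mA | rewrite -mA]; apply: prodset_in => //.
- by rewrite -(mul1g g); apply: gradingM.
- by rewrite -(mulg1 g^-1%g); apply: gradingM.
Qed.

Lemma eps_centralizes_S1 g s : S 1%g s -> m (eps g) s = m s (eps g).
Proof.
move=> Ss; have [Re e_unit] := eps_unit g.
have [sR Rs] := prodset_mulS1 Ss Re.
by rewrite -{1}(e_unit _ Rs).2 -mA (e_unit _ sR).1.
Qed.

Lemma eps_comm g h : m (eps g) (eps h) = m (eps h) (eps g).
Proof. exact/eps_centralizes_S1/eps_S1. Qed.

Lemma SC_in D g x : D g -> S g x -> SC S D x.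
Proof. by move=> Dg Sx; apply: fsums_in; exists g. Qed.

Lemma SCN D x : SC S D x -> SC S D (- x).
Proof. by apply: fsumsN => y [g [Dg Sy]]; exists g; split=> //; apply: gradingN. Qed.

Lemma SC_mul3 C1 C2 C3 D : (forall g k h, C1 g -> C2 k -> C3 h -> D (g * k * h)%g) ->
  forall x y z, SC S C1 x -> SC S C2 y -> SC S C3 z -> SC S D (m (m x y) z).
Proof.
move=> C123D x y z C1x C2y; move: z.
apply: (fsums_mul_least (T := fun w => forall z, SC S C3 z -> SC S D (m w z))) C1x C2y.
- by move=> z _; rewrite m0l; exact: fsums0.
- by move=> u v Du Dv z C3z; rewrite mDl; apply: fsumsD; [exact: Du | exact: Dv].
move=> s t [g [C1g Ss]] [k [C2k St]].
apply: fsums_least => [|u v|u [h [C3h Su]]]; rewrite ?m0r ?mDr; first exact: fsums0.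
  exact: fsumsD.
by apply: (SC_in (g := (g * k * h)%g)); [auto | apply: gradingM => //; exact: gradingM].
Qed.

Section Heap.
Variable C : G -> Prop.
Hypothesis C_mul3 : forall g k h, C g -> C k^-1%g -> C h -> C (g * k * h)%g.
Hypothesis C_nonempty : exists g, C g.

Local Notation Ci := (coset_inv C).
Local Notation RC := (RC m S C).
Local Notation EC := (EC m S eps C).

Lemma coset_inv_mul3 g k h : Ci g -> C k -> Ci h -> Ci (g * k * h)%g.
Proof. by move=> Cg Ck Ch; rewrite /coset_inv !invgM mulgA; apply: C_mul3; rewrite ?invgK. Qed.

Lemma RC_rng_closed : rng_closed RC.
Proof.
split; first exact: fsumsD.
split; first by apply: prodsetN; exact: SCN.
move=> x y Rx Ry; move: x Rx.
apply: (prodset_least (T := fun x => RC (m x y))) => [|u v Ru Rv|a b Ca Cb].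
- by rewrite m0l; exact: fsums0.
- by rewrite /= mDl; exact: fsumsD.
move: y Ry; apply: (prodset_least (T := fun y => RC (m (m a b) y))) => [|u v Ru Rv|c d Cc Cd].
- by rewrite m0r; exact: fsums0.
- by rewrite /= mDr; exact: fsumsD.
rewrite -mA (mA b); apply: prodset_in => //.
exact: (SC_mul3 coset_inv_mul3).
Qed.

Lemma eps_RC g : C g -> RC (eps g).
Proof.
move=> Cg; apply: prodset_mono (eps_unit g).1 => x; first exact: SC_in.
by apply: SC_in; rewrite /coset_inv invgK.
Qed.

Lemma RC_SC_symmetric : set_eq (prodset m RC (SC S C)) (SC S C).
Proof.
move=> x; split.
- apply: prodset_least => [||r s Rr Cs]; [exact: fsums0 | exact: fsumsD |].
  move: r Rr; apply: (prodset_least (T := fun r => SC S C (m r s))) => [|u v Cu Cv|a b Ca Cb].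
  + by rewrite m0l; exact: fsums0.
  + by rewrite /= mDl; exact: fsumsD.
  exact: (SC_mul3 C_mul3).
- apply: fsums_least => [||s [g [Cg Ss]]]; [exact: fsums0 | exact: fsumsD |].
  by rewrite -(eps_mull Ss); apply: prodset_in; [exact: eps_RC | exact: SC_in Ss].
Qed.

Local Notation epsC := (fun e => exists g, C g /\ e = eps g).

Lemma epsC_idem e : epsC e -> idem m RC e.
Proof. by case=> g [Cg ->]; split; [exact: eps_RC | exact: eps_idem]. Qed.

Lemma epsC_comm a b : epsC a -> epsC b -> m a b = m b a.
Proof. by case=> g [_ ->] [h [_ ->]]; exact: eps_comm. Qed.

Lemma eps_EC g : C g -> EC (eps g).
Proof. by move=> Cg; apply: joins_in; exists g. Qed.

Lemma EC_nonempty : exists e, EC e.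
Proof. by case: C_nonempty => g /eps_EC; exists (eps g). Qed.

Lemma EC_idem e : EC e -> idem m RC e.
Proof. by case/(joins_idem_commutant RC_rng_closed epsC_idem epsC_comm). Qed.

Lemma EC_comm a b : EC a -> EC b -> m a b = m b a.
Proof. exact: (joins_comm RC_rng_closed epsC_idem epsC_comm). Qed.

Lemma EC_directed : directed EC.
Proof. exact: join_closed_directed RC_rng_closed EC_idem EC_comm (@joins_join _ _ _ _). Qed.

Lemma RC_locally_fixed r : RC r -> locally_fixed EC r.
Proof.
have fixed0 := locally_fixed0 EC_nonempty.
have fixedD := locally_fixedD EC_directed.
apply: prodset_least => // a b; apply: fsums_mul_least => // s t [g [Cg Ss]] [h [Ch St]].
exact: (locally_fixed_mul EC_directed (eps_EC Cg) (eps_EC Ch) (eps_mull Ss) (eps_mulr St)).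
Qed.

Lemma EC_local_units : local_units m RC EC.
Proof.
split; first exact: EC_idem.
split; first exact: EC_comm.
split; first by move=> a b c; exact: joins_join.
exact: RC_locally_fixed.
Qed.

Lemma EC_enough_idempotents : no_infinite_chain m EC -> enough_idempotents m RC.
Proof. exact: local_units_enough_idempotents RC_rng_closed EC_local_units EC_nonempty. Qed.

End Heap.
End Grading.
End NonunitalRing.

Section Cosets.
Variables (G : groupType) (N C : G -> Prop).
Hypotheses (HN : normal_subgroup N) (HC : is_coset N C).

Lemma coset_mul3 g k h : C g -> C k^-1%g -> C h -> C (g * k * h)%g.
Proof.
case: HC => x Cx; case: HN => _ [NM [NV _]] /Cx Ng /Cx Nk /Cx Nh; apply/Cx.
have := NM _ _ (NM _ _ Ng (NV _ Nk)) Nh.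
by rewrite invgM !invgK !mulgA mulgK.
Qed.

Lemma coset_nonempty : exists g, C g.
Proof. by case: HC => x Cx; exists x; apply/Cx; rewrite mulVg; case: HN. Qed.

End Cosets.

Theorem theorem5p15 (G : groupType) (N : G -> Prop) (HN : normal_subgroup N)
  (V : zmodType) (m : V -> V -> V) (Hm : nonunital_ring_axioms m)
  (S : G -> V -> Prop) (HS : grading m S) (Heps_strong : epsilon_strong m S)
  (eps : G -> V)
  (Heps : forall g : G, unit_of m (prodset m (S g) (S (g^-1)%g)) (eps g)) :
  (forall C : G -> Prop, is_coset N C -> local_units m (RC m S C) (EC m S eps C)) /\
  induced_essentially_eps_strong m N S /\
  ((forall C : G -> Prop, is_coset N C ->
       no_infinite_chain m (EC m S eps C) /\ maximals_orthogonal m (EC m S eps C)) ->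
   induced_virtually_eps_strong m N S).
Proof.
have [S_sym _] := Heps_strong.
have local C (HC : is_coset N C) := EC_local_units Hm HS S_sym Heps
  (coset_mul3 HN HC) (coset_nonempty HN HC).
have sym : induced_symmetric m N S := fun C HC =>
  RC_SC_symmetric Hm HS S_sym Heps (coset_mul3 HN HC).
split; first exact: local.
split; first by split=> // C HC; exists (EC m S eps C); exact: local.
move=> chains; split=> // C HC.
apply: (EC_enough_idempotents Hm HS S_sym Heps (coset_mul3 HN HC) (coset_nonempty HN HC)).
exact: (chains C HC).1.
Qed.
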